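(* Consider the system $\dot x(t)=f(x(t),u(t))$, $y(t)=h(x(t),u(t))$ with $x(t)\in X\subset\mathbb{R}^n$, $u(t)\in U\subset\mathbb{R}^m$, $y(t)\in Y\subset\mathbb{R}^m$, where trajectories remain in $X$ and $Y$, and let $\phi(t,t_0,x_0,u_{t_0:t})$ denote the state at time $t$ from state $x_0$ at time $t_0$ under input $u_{t_0:t}=\{u(\tau):\tau\in[t_0,t]\}$. Let $S:X\to\mathbb{R}_{\ge0}$ with $S(\mathbf{0})=0$ be a storage function, and for $t_1>t_0\ge0$, $x_0\in X$, $u_{t_0:t_1}\subset U$, with $y$ the resulting output and $x_1=\phi(t_1,t_0,x_0,u_{t_0:t_1})$, put $$\psi_\gamma=\frac{\int_{t_0}^{t_1}y^\mathsf{T}y\,dt+(S(x_1)-S(x_0))}{\int_{t_0}^{t_1}u^\mathsf{T}u\,dt},\quad \psi_\nu=\frac{\int_{t_0}^{t_1}u^\mathsf{T}y\,dt-(S(x_1)-S(x_0))}{\int_{t_0}^{t_1}u^\mathsf{T}u\,dt},\quad \psi_\rho=\frac{\int_{t_0}^{t_1}u^\mathsf{T}y\,dt-(S(x_1)-S(x_0))}{\int_{t_0}^{t_1}y^\mathsf{T}y\,dt},$$ defined whenever the denominator is nonzero, and let $\gamma_*^2=\max\psi_\gamma$, $\nu_*=\min\psi_\nu$, $\rho_*=\min\psi_\rho$ over all such $(t_1,t_0,x_0,u_{t_0:t_1})$ with nonzero denominator. Suppose a given input-output profile $(u(t),y(t))$, $t\in[t_o,t_f)$, with state trajectory $x(t)$,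 satisfies $|\tfrac{d}{dt}S(x(t))|\le K_s$ for all $t\in[t_o,t_f)$, for a known constant $K_s$. For $[t_0,t_1)\subseteq[t_o,t_f)$ define $$\hat\psi_\gamma(t_0,t_1)=\frac{\int_{t_0}^{t_1}y^\mathsf{T}y\,dt-K_s(t_1-t_0)}{\int_{t_0}^{t_1}u^\mathsf{T}u\,dt},\ \hat\psi_\nu(t_0,t_1)=\frac{\int_{t_0}^{t_1}u^\mathsf{T}y\,dt+K_s(t_1-t_0)}{\int_{t_0}^{t_1}u^\mathsf{T}u\,dt},\ \hat\psi_\rho(t_0,t_1)=\frac{\int_{t_0}^{t_1}u^\mathsf{T}y\,dt+K_s(t_1-t_0)}{\int_{t_0}^{t_1}y^\mathsf{T}y\,dt},$$ and let $\hat\gamma_*^2=\max\hat\psi_\gamma$, $\hat\nu_*=\min\hat\psi_\nu$, $\hat\rho_*=\min\hat\psi_\rho$, each over the intervals $[t_0,t_1)\subseteq[t_o,t_f)$, $t_0<t_1$, on which the respective denominator is nonzero. Then $\hat\gamma_*^2\le\gamma_*^2$, $\hat\nu_*\ge\nu_*$ and $\hat\rho_*\ge\rho_*$.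
   Context: The quantities $\gamma_*^2,\nu_*,\rho_*$ are the paper's optimal $\mathcal{L}_2$-gain, input feedforward passivity and output feedback passivity indices, expressed through the fractional functions above. *)

From HB Require Import structures.
From mathcomp Require Import all_boot all_order all_algebra.
From mathcomp Require Import all_classical all_reals all_analysis.
Set Implicit Arguments. Unset Strict Implicit. Unset Printing Implicit Defensive.
Import Order.TTheory GRing.Theory Num.Theory.
Import numFieldNormedType.Exports.
Local Open Scope classical_set_scope.
Local Open Scope ring_scope.

Section Defs.
Variable R : realType.

Definition dotv (m : nat) (a b : 'rV[R]_m) : R := \sum_(i < m) a 0 i * b 0 i.

Definition int_on (t0 t1 : R) (g : R -> R) : R :=
  Rintegral lebesgue_measure `[t0, t1]%classic g.

Definition is_solution (n m : nat) (f : 'rV[R]_n -> 'rV[R]_m -> 'rV[R]_n)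
  (t0 t1 : R) (x : R -> 'rV[R]_n) (u : R -> 'rV[R]_m) : Prop :=
  {within `[t0, t1]%classic, continuous x} /\
  (forall t, t0 < t < t1 -> derivable x t 1 /\ derive1 x t = f (x t) (u t)).

(* admissible data (t1, t0, x0 = x t0, u_{t0:t1}) together with the resulting
   state trajectory x (x t = phi(t,t0,x0,u_{t0:t})) *)
Definition admissible (n m : nat) (X : set 'rV[R]_n) (U Y : set 'rV[R]_m)
  (f : 'rV[R]_n -> 'rV[R]_m -> 'rV[R]_n) (h : 'rV[R]_n -> 'rV[R]_m -> 'rV[R]_m)
  (t0 t1 : R) (x : R -> 'rV[R]_n) (u : R -> 'rV[R]_m) : Prop :=
  0 <= t0 /\ t0 < t1 /\ is_solution f t0 t1 x u /\
  (forall t, t0 <= t <= t1 -> U (u t) /\ X (x t) /\ Y (h (x t) (u t))).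

Section Psi.
Variables (n m : nat) (h : 'rV[R]_n -> 'rV[R]_m -> 'rV[R]_m) (S : 'rV[R]_n -> R).
Variables (t0 t1 : R) (x : R -> 'rV[R]_n) (u : R -> 'rV[R]_m).
Let y t := h (x t) (u t).
Definition int_yy := int_on t0 t1 (fun t => dotv (y t) (y t)).
Definition int_uu := int_on t0 t1 (fun t => dotv (u t) (u t)).
Definition int_uy := int_on t0 t1 (fun t => dotv (u t) (y t)).
Definition psi_gamma := (int_yy + (S (x t1) - S (x t0))) / int_uu.
Definition psi_nu := (int_uy - (S (x t1) - S (x t0))) / int_uu.
Definition psi_rho := (int_uy - (S (x t1) - S (x t0))) / int_yy.
End Psi.

Section Optimal.
Variables (n m : nat) (X : set 'rV[R]_n) (U Y : set 'rV[R]_m).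
Variables (f : 'rV[R]_n -> 'rV[R]_m -> 'rV[R]_n) (h : 'rV[R]_n -> 'rV[R]_m -> 'rV[R]_m).
Variable (S : 'rV[R]_n -> R).

Definition gamma_star2 : \bar R := ereal_sup
  [set z | exists t0 t1 x u, admissible X U Y f h t0 t1 x u /\
     int_uu t0 t1 u <> 0 /\ z = (psi_gamma h S t0 t1 x u)%:E].
Definition nu_star : \bar R := ereal_inf
  [set z | exists t0 t1 x u, admissible X U Y f h t0 t1 x u /\
     int_uu t0 t1 u <> 0 /\ z = (psi_nu h S t0 t1 x u)%:E].
Definition rho_star : \bar R := ereal_inf
  [set z | exists t0 t1 x u, admissible X U Y f h t0 t1 x u /\
     int_yy h t0 t1 x u <> 0 /\ z = (psi_rho h S t0 t1 x u)%:E].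
End Optimal.

Section Hat.
Variables (m : nat) (u y : R -> 'rV[R]_m) (Ks to tf : R).
Definition hint_yy t0 t1 := int_on t0 t1 (fun t => dotv (y t) (y t)).
Definition hint_uu t0 t1 := int_on t0 t1 (fun t => dotv (u t) (u t)).
Definition hint_uy t0 t1 := int_on t0 t1 (fun t => dotv (u t) (y t)).
Definition psihat_gamma t0 t1 := (hint_yy t0 t1 - Ks * (t1 - t0)) / hint_uu t0 t1.
Definition psihat_nu t0 t1 := (hint_uy t0 t1 + Ks * (t1 - t0)) / hint_uu t0 t1.
Definition psihat_rho t0 t1 := (hint_uy t0 t1 + Ks * (t1 - t0)) / hint_yy t0 t1.
Definition gammahat_star2 : \bar R := ereal_sup
  [set z | exists t0 t1, to <= t0 /\ t0 < t1 /\ t1 <= tf /\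
     hint_uu t0 t1 <> 0 /\ z = (psihat_gamma t0 t1)%:E].
Definition nuhat_star : \bar R := ereal_inf
  [set z | exists t0 t1, to <= t0 /\ t0 < t1 /\ t1 <= tf /\
     hint_uu t0 t1 <> 0 /\ z = (psihat_nu t0 t1)%:E].
Definition rhohat_star : \bar R := ereal_inf
  [set z | exists t0 t1, to <= t0 /\ t0 < t1 /\ t1 <= tf /\
     hint_yy t0 t1 <> 0 /\ z = (psihat_rho t0 t1)%:E].
End Hat.
End Defs.

From HB Require Import structures.
From mathcomp Require Import all_boot all_order all_algebra.
From mathcomp Require Import all_classical all_reals all_analysis.
Set Implicit Arguments. Unset Strict Implicit. Unset Printing Implicit Defensive.
Import Order.TTheory GRing.Theory Num.Theory.
Import numFieldNormedType.Exports.
Local Open Scope classical_set_scope.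
Local Open Scope ring_scope.

(** Every window [t0, t1] of the profile is itself an admissible experiment
    with the same integrals, and by the mean value theorem its storage change
    satisfies |S(x t1) - S(x t0)| <= Ks (t1 - t0).  Replacing the storage term
    by this worst case makes each estimated ratio no better than the true
    ratio on that window, which is one of the candidates for the optimal index. *)

Lemma dotv_ge0 (R : realType) (m : nat) (a : 'rV[R]_m) : 0 <= dotv a a.
Proof. by apply: sumr_ge0 => i _; rewrite -expr2 sqr_ge0. Qed.

Lemma int_on_dotv_ge0 (R : realType) (m : nat) (a b : R) (v : R -> 'rV[R]_m) :
  0 <= int_on a b (fun t => dotv (v t) (v t)).
Proof. by apply: Rintegral_ge0 => t _; apply: dotv_ge0. Qed.

Lemma norm_increment_le_of_derive1 (R : realType) (g : R -> R) (a b K : R) :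
  a < b -> {within `[a, b], continuous g} ->
  (forall t, a < t < b -> derivable g t 1 /\ `|derive1 g t| <= K) ->
  `|g b - g a| <= K * (b - a).
Proof.
move=> ab g_cont g_der.
have g_is_derive t : t \in `]a, b[ -> is_derive t 1 g (derive1 g t).
  by rewrite in_itv => /g_der[dg _]; rewrite derive1E; apply: derivableP.
have [c c_ab ->] := MVT ab g_is_derive g_cont.
have ba_ge0 : 0 <= b - a by rewrite subr_ge0 ltW.
rewrite normrM (ger0_norm ba_ge0) ler_wpM2r //.
by move: c_ab; rewrite in_itv => /g_der[].
Qed.

Lemma is_solution_sub (R : realType) (n m : nat)
    (f : 'rV[R]_n -> 'rV[R]_m -> 'rV[R]_n) (a b t0 t1 : R)
    (x : R -> 'rV[R]_n) (u : R -> 'rV[R]_m) :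
  a <= t0 -> t1 <= b -> is_solution f a b x u -> is_solution f t0 t1 x u.
Proof.
move=> a_t0 t1_b [x_cont x_der]; split.
  apply: continuous_subspaceW x_cont => t /=; rewrite !in_itv /= => /andP[t0t tt1].
  by rewrite (le_trans a_t0 t0t) (le_trans tt1 t1_b).
move=> t /andP[t0t tt1]; apply: x_der.
by rewrite (le_lt_trans a_t0 t0t) (lt_le_trans tt1 t1_b).
Qed.

Section Profile.
Variables (R : realType) (n m : nat) (X : set 'rV[R]_n) (U Y : set 'rV[R]_m).
Variables (f : 'rV[R]_n -> 'rV[R]_m -> 'rV[R]_n) (h : 'rV[R]_n -> 'rV[R]_m -> 'rV[R]_m).
Variables (S : 'rV[R]_n -> R) (to tf Ks : R).
Variables (x : R -> 'rV[R]_n) (u y : R -> 'rV[R]_m).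
Hypotheses (to_ge0 : 0 <= to) (x_sol : is_solution f to tf x u).
Hypothesis profile_in : forall t, to <= t <= tf -> U (u t) /\ X (x t) /\ Y (y t).
Hypothesis y_out : forall t, to <= t <= tf -> y t = h (x t) (u t).
Hypothesis Sx_cont : {within `[to, tf], continuous (S \o x)}.
Hypothesis Sx_der : forall t, to < t < tf ->
  derivable (S \o x) t 1 /\ `|derive1 (S \o x) t| <= Ks.

Section Window.
Variables t0 t1 : R.
Hypotheses (to_t0 : to <= t0) (t0_t1 : t0 < t1) (t1_tf : t1 <= tf).

Let in_profile t : t0 <= t <= t1 -> to <= t <= tf.
Proof.
by case/andP=> t0t tt1; rewrite (le_trans to_t0 t0t) (le_trans tt1 t1_tf).
Qed.

Lemma window_admissible : admissible X U Y f h t0 t1 x u.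
Proof.
split; first exact: le_trans to_t0.
split=> //; split; first exact: is_solution_sub x_sol.
by move=> t /in_profile t_in; rewrite -y_out //; apply: profile_in.
Qed.

Let window_output : {in `[t0, t1]%classic, (fun t => h (x t) (u t)) =1 y}.
Proof. by move=> t; rewrite inE /= in_itv /= => /in_profile /y_out ->. Qed.

Lemma window_int_yy : int_yy h t0 t1 x u = hint_yy y t0 t1.
Proof. by apply: eq_Rintegral => t /window_output ->. Qed.

Lemma window_int_uy : int_uy h t0 t1 x u = hint_uy u y t0 t1.
Proof. by apply: eq_Rintegral => t /window_output ->. Qed.

Lemma window_storage_bound : `|S (x t1) - S (x t0)| <= Ks * (t1 - t0).
Proof.
apply: (norm_increment_le_of_derive1 (g := S \o x)) => //.
  apply: continuous_subspaceW Sx_cont => t /=; rewrite !in_itv /=.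
  exact: in_profile.
move=> t /andP[t0t tt1]; apply: Sx_der.
by rewrite (le_lt_trans to_t0 t0t) (lt_le_trans tt1 t1_tf).
Qed.

Let storage_lower : - (Ks * (t1 - t0)) <= S (x t1) - S (x t0).
Proof. by move: window_storage_bound; rewrite ler_norml => /andP[]. Qed.

Lemma psihat_gamma_le_psi :
  psihat_gamma u y Ks t0 t1 <= psi_gamma h S t0 t1 x u.
Proof.
rewrite /psihat_gamma /psi_gamma window_int_yy.
by apply: ler_wpM2r; [rewrite invr_ge0 int_on_dotv_ge0 | rewrite lerD2l].
Qed.

Lemma psi_nu_le_psihat : psi_nu h S t0 t1 x u <= psihat_nu u y Ks t0 t1.
Proof.
rewrite /psihat_nu /psi_nu window_int_uy.
by apply: ler_wpM2r; [rewrite invr_ge0 int_on_dotv_ge0 | rewrite lerD2l lerNl].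
Qed.

Lemma psi_rho_le_psihat : psi_rho h S t0 t1 x u <= psihat_rho u y Ks t0 t1.
Proof.
rewrite /psihat_rho /psi_rho window_int_uy window_int_yy.
by apply: ler_wpM2r; [rewrite invr_ge0 int_on_dotv_ge0 | rewrite lerD2l lerNl].
Qed.

End Window.

Lemma gammahat_star2_le_gamma_star2 :
  (gammahat_star2 u y Ks to tf <= gamma_star2 X U Y f h S)%E.
Proof.
apply: ge_ereal_sup => _ [t0 [t1 [to_t0 [t0_t1 [t1_tf [uu_neq0 ->]]]]]].
apply: le_ereal_sup_tmp; exists (psi_gamma h S t0 t1 x u)%:E.
  by exists t0, t1, x, u; split; [exact: window_admissible | split].
by rewrite lee_fin psihat_gamma_le_psi.
Qed.

Lemma nu_star_le_nuhat_star :
  (nu_star X U Y f h S <= nuhat_star u y Ks to tf)%E.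
Proof.
apply: le_ereal_inf_tmp => _ [t0 [t1 [to_t0 [t0_t1 [t1_tf [uu_neq0 ->]]]]]].
apply: ge_ereal_inf; exists (psi_nu h S t0 t1 x u)%:E.
  by exists t0, t1, x, u; split; [exact: window_admissible | split].
by rewrite lee_fin psi_nu_le_psihat.
Qed.

Lemma rho_star_le_rhohat_star :
  (rho_star X U Y f h S <= rhohat_star u y Ks to tf)%E.
Proof.
apply: le_ereal_inf_tmp => _ [t0 [t1 [to_t0 [t0_t1 [t1_tf [yy_neq0 ->]]]]]].
apply: ge_ereal_inf; exists (psi_rho h S t0 t1 x u)%:E.
  exists t0, t1, x, u; split; first exact: window_admissible.
  by rewrite window_int_yy.
by rewrite lee_fin psi_rho_le_psihat.
Qed.

End Profile.

Theorem lemma2 (R : realType) (n m : nat)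
  (X : set 'rV[R]_n) (U Y : set 'rV[R]_m)
  (f : 'rV[R]_n -> 'rV[R]_m -> 'rV[R]_n) (h : 'rV[R]_n -> 'rV[R]_m -> 'rV[R]_m)
  (S : 'rV[R]_n -> R)
  (HS0 : S 0 = 0) (HSnn : forall z, X z -> 0 <= S z)
  (to tf Ks : R) (x : R -> 'rV[R]_n) (u y : R -> 'rV[R]_m)
  (Hto : 0 <= to)
  (Htraj : is_solution f to tf x u)
  (Hin : forall t, to <= t <= tf -> U (u t) /\ X (x t) /\ Y (y t))
  (Hout : forall t, to <= t <= tf -> y t = h (x t) (u t))
  (HScont : {within `[to, tf]%classic, continuous (S \o x)})
  (HSder : forall t, to < t < tf ->
     derivable (S \o x) t 1 /\ `|derive1 (S \o x) t| <= Ks) :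
  (gammahat_star2 u y Ks to tf <= gamma_star2 X U Y f h S)%E /\
  (nu_star X U Y f h S <= nuhat_star u y Ks to tf)%E /\
  (rho_star X U Y f h S <= rhohat_star u y Ks to tf)%E.
Proof.
split; first exact: (gammahat_star2_le_gamma_star2 Hto Htraj Hin Hout HScont HSder).
split; first exact: (nu_star_le_nuhat_star Hto Htraj Hin Hout HScont HSder).
exact: (rho_star_le_rhohat_star Hto Htraj Hin Hout HScont HSder).
Qed.
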